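(* Let $\alpha>-1$, $j\in\mathbb{N}\cup\{0\}$, $M>0$. Let $\{l_n^{(\alpha)}\}_{n\ge0}$ be the orthonormal Laguerre polynomials with respect to $x^\alpha e^{-x}$ on $(0,\infty)$, normalized so that $l_n^{(\alpha)}(0)>0$, let $\lambda_n=n$, $K_n^{(j,j)}(0,0)=\sum_{i=0}^n\big((l_i^{(\alpha)})^{(j)}(0)\big)^2$, and define $$\widetilde\lambda_n=\lambda_n+M\sum_{i=j+1}^n(\lambda_i-\lambda_{i-1})K_{i-1}^{(j,j)}(0,0),\qquad n\ge j+1.$$ Then $$\lim_{n\to+\infty}\frac{\widetilde\lambda_n}{n^{2j+\alpha+2}}=\frac{M}{(2j+\alpha+2)(2j+\alpha+1)\Gamma^2(\alpha+j+1)}.$$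
   Context: Background: $\lambda_n=n$ are the eigenvalues of the Laguerre equation $-xy''+(x-\alpha-1)y'=ny$, and $\widetilde\lambda_n$ are the eigenvalues of the differential operator $\mathbf{L}$ having as eigenfunctions the polynomials orthonormal with respect to $(f,g)=\int_0^\infty fg\,x^\alpha e^{-x}dx+Mf^{(j)}(0)g^{(j)}(0)$ (with the free parameters $\alpha_1=\dots=\alpha_j=0$). The sign normalization of $l_n^{(\alpha)}$ does not affect the quantities involved. *)

From Stdlib Require Import Reals List Arith.
From Coquelicot Require Import Coquelicot.
Open Scope R_scope.

Definition sumR (f : nat -> R) (m n : nat) : R :=
  fold_right Rplus 0 (map f (seq m (S n - m))).

Definition prodR (f : nat -> R) (m n : nat) : R :=
  fold_right Rmult 1 (map f (seq m (S n - m))).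

Definition Gamma (s : R) : R :=
  RInt_gen (fun t => Rpower t (s - 1) * exp (- t)) (at_right 0) (Rbar_locally p_infty).

Definition binomR (r : R) (m : nat) : R :=
  prodR (fun p => r - INR p + 1) 1 m / INR (fact m).

Definition laguerre (a : R) (n : nat) (x : R) : R :=
  sumR (fun k => (-1) ^ k * binomR (INR n + a) (n - k) * x ^ k / INR (fact k)) 0 n.

(* squared L^2(x^a e^{-x} dx, (0,oo)) norm of L_n^(a): Gamma(n+a+1)/n! *)
Definition laguerre_norm2 (a : R) (n : nat) : R :=
  Gamma (INR n + a + 1) / INR (fact n).

Definition laguerre_on (a : R) (n : nat) (x : R) : R :=
  laguerre a n x / sqrt (laguerre_norm2 a n).

Definition Kjj (a : R) (j n : nat) : R :=
  sumR (fun i => (Derive_n (laguerre_on a i) j 0) ^ 2) 0 n.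

Definition lam (n : nat) : R := INR n.

Definition lam_tilde (a M : R) (j n : nat) : R :=
  lam n + M * sumR (fun i => (lam i - lam (i - 1)) * Kjj a j (i - 1)) (j + 1) n.

From Stdlib Require Import Reals.
From Coquelicot Require Import Coquelicot.
From Stdlib Require Import List Arith Lra Lia Classical.
Open Scope R_scope.

(* Squaring the explicit coefficient of x^j in l_n^(a) gives
   ((l_n^(a))^(j)(0))^2 = Gamma(n+a+1) n! / (Gamma(j+a+1)^2 ((n-j)!)^2), and Wendel's inequality
   (s/(s+b))^(1-b) <= Gamma(s+b) / (s^b Gamma(s)) <= 1 (0 <= b <= 1) turns this into
   n^(2j+a) / Gamma(j+a+1)^2 asymptotically; Gamma itself is handled from its integral,
   integration by parts giving Gamma(s+1) = s Gamma(s).  Since lambda_i - lambda_(i-1) = 1,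
   tilde lambda_n is n plus M times a double partial sum of these squares, up to an additive
   constant, and two applications of the Stolz-Cesaro theorem (partial sums of u_n ~ c n^(q-1)
   grow like c n^q / q) give the limit. *)

Lemma Rpower_pos x c : 0 < Rpower x c.
Proof. apply exp_pos. Qed.

Lemma Rpower_base_1 c : Rpower 1 c = 1.
Proof. unfold Rpower. rewrite ln_1, Rmult_0_r. apply exp_0. Qed.

Lemma Rpower_minus_1 x c : 0 < x -> Rpower x (c - 1) = Rpower x c / x.
Proof.
  intros hx. replace (c - 1) with (c + - (1)) by ring.
  rewrite Rpower_plus, Rpower_Ropp, Rpower_1 by exact hx. reflexivity.
Qed.

Lemma exp_le_exp_of_le x y : x <= y -> exp x <= exp y.
Proof. intros [H | ->]; [apply Rlt_le, exp_increasing, H | apply Rle_refl]. Qed.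

Lemma Rbar_mult_pos_pinfty (c : R) : 0 < c -> Rbar_mult c p_infty = p_infty.
Proof.
  intros hc. simpl. unfold Rbar_mult'.
  case Rle_dec; intro h; [| lra]. case Rle_lt_or_eq_dec; intro; [reflexivity | lra].
Qed.

(** * Improper integrals over the half-line *)

Lemma at_right_0_between c : 0 < c -> at_right 0 (fun x => 0 < x < c).
Proof.
  intros hc. exists (mkposreal c hc). intros x hx hx0.
  change (Rabs (x - 0) < c) in hx. apply Rabs_def2 in hx. lra.
Qed.

Lemma filter_prod_half_line (P : R * R -> Prop) :
  (forall a b, 0 < a -> 0 < b -> P (a, b)) ->
  filter_prod (at_right 0) (Rbar_locally p_infty) P.
Proof.
  intros HP. apply (Filter_prod _ _ _ (fun x => 0 < x) (fun y => 0 < y)); auto.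
  - exists (mkposreal 1 Rlt_0_1). auto.
  - exists 0. auto.
Qed.

Lemma Rmin_Rmax_pos a b x : 0 < a -> 0 < b -> Rmin a b <= x <= Rmax a b -> 0 < x.
Proof. unfold Rmin, Rmax; destruct (Rle_dec a b); lra. Qed.

Lemma is_RInt_gen_half_line_unique (f : R -> R) l1 l2 :
  is_RInt_gen f (at_right 0) (Rbar_locally p_infty) l1 ->
  is_RInt_gen f (at_right 0) (Rbar_locally p_infty) l2 -> l1 = l2.
Proof.
  intros H1 H2.
  rewrite <- (is_RInt_gen_unique (V := R_CompleteNormedModule) _ _ H1).
  exact (is_RInt_gen_unique (V := R_CompleteNormedModule) _ _ H2).
Qed.

Lemma is_RInt_gen_half_line_lin (f g : R -> R) If Ig c d :
  is_RInt_gen f (at_right 0) (Rbar_locally p_infty) If ->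
  is_RInt_gen g (at_right 0) (Rbar_locally p_infty) Ig ->
  is_RInt_gen (fun t => c * f t + d * g t) (at_right 0) (Rbar_locally p_infty) (c * If + d * Ig).
Proof.
  intros Hf Hg.
  exact (is_RInt_gen_plus (V := R_NormedModule) _ _ _ _
           (is_RInt_gen_scal (V := R_NormedModule) _ c _ Hf)
           (is_RInt_gen_scal (V := R_NormedModule) _ d _ Hg)).
Qed.

Lemma is_RInt_gen_half_line_le (f g : R -> R) If Ig :
  (forall x, 0 < x -> 0 <= f x <= g x) ->
  is_RInt_gen f (at_right 0) (Rbar_locally p_infty) If ->
  is_RInt_gen g (at_right 0) (Rbar_locally p_infty) Ig -> If <= Ig.
Proof.
  intros Hfg Hf Hg. apply Rle_trans with (Rabs If); [apply Rle_abs |].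
  apply (RInt_gen_norm (V := R_CompleteNormedModule) (Fa := at_right 0)
           (Fb := Rbar_locally p_infty) f g); auto.
  - apply (Filter_prod _ _ _ (fun x => 0 < x < 1) (fun y => 1 < y)).
    + apply at_right_0_between, Rlt_0_1.
    + exists 1. auto.
    + intros x y hx hy. simpl. lra.
  - apply filter_prod_half_line. intros a b ha hb x hx. simpl in hx.
    change (Rabs (f x) <= g x). rewrite Rabs_pos_eq; apply Hfg; lra.
Qed.

Lemma is_RInt_gen_half_line_Derive (F f : R -> R) l0 l1 :
  (forall x, 0 < x -> is_derive F x (f x)) ->
  (forall x, 0 < x -> continuous f x) ->
  filterlim F (at_right 0) (locally l0) ->
  filterlim F (Rbar_locally p_infty) (locally l1) ->
  is_RInt_gen f (at_right 0) (Rbar_locally p_infty) (l1 - l0).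
Proof.
  intros HF Hf H0 H1.
  apply (is_RInt_gen_ext (Derive F)).
  { apply filter_prod_half_line. intros a b ha hb x hx.
    apply is_derive_unique, HF, (Rmin_Rmax_pos a b); simpl in *; lra. }
  apply is_RInt_gen_Derive; auto; apply filter_prod_half_line; intros a b ha hb x hx;
    assert (hx0 : 0 < x) by exact (Rmin_Rmax_pos a b x ha hb hx).
  - exists (f x). auto.
  - apply (continuous_ext_loc _ f); [| auto].
    assert (hx2 : 0 < x / 2) by lra. exists (mkposreal _ hx2). intros y hy.
    change (Rabs (y - x) < x / 2) in hy. apply Rabs_def2 in hy.
    symmetry. apply is_derive_unique, HF. lra.
Qed.

Section NonnegativeIntegrand.

Variable f : R -> R.
Hypothesis f_cont : forall x, 0 < x -> continuous f x.
Hypothesis f_ge0 : forall x, 0 < x -> 0 <= f x.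

Lemma ex_RInt_half_line x y : 0 < x -> 0 < y -> ex_RInt f x y.
Proof.
  intros hx hy. apply (ex_RInt_continuous (V := R_CompleteNormedModule)).
  intros z hz. apply f_cont. exact (Rmin_Rmax_pos x y z hx hy hz).
Qed.

Lemma RInt_le_RInt_wider a b c d : 0 < a <= b -> b <= c <= d -> RInt f b c <= RInt f a d.
Proof.
  intros hab hcd.
  assert (Hge0 : forall x y, 0 < x <= y -> 0 <= RInt f x y).
  { intros x y hxy. apply RInt_ge_0; [lra | apply ex_RInt_half_line; lra |].
    intros; apply f_ge0; lra. }
  rewrite <- (RInt_Chasles f a b d), <- (RInt_Chasles f b c d)
    by (apply ex_RInt_half_line; lra).
  pose proof (Hge0 a b ltac:(lra)). pose proof (Hge0 c d ltac:(lra)).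
  unfold plus; simpl. lra.
Qed.

(* The improper integral is the supremum of the partial integrals, which grow with the interval. *)
Lemma ex_RInt_gen_half_line_bounded B :
  (forall a b, 0 < a <= b -> RInt f a b <= B) ->
  ex_RInt_gen f (at_right 0) (Rbar_locally p_infty).
Proof.
  intros HB.
  set (E := fun y => exists a b, 0 < a <= b /\ y = RInt f a b).
  destruct (completeness E) as [L [L_ub L_least]].
  { exists B. intros y (a & b & hab & ->). auto. }
  { exists (RInt f 1 1), 1, 1. split; [lra | reflexivity]. }
  exists L. intros P [eps HP].
  assert (Hnear : exists a0 b0, 0 < a0 <= b0 /\ L - eps < RInt f a0 b0).
  { apply NNPP. intro Hn.
    assert (Hub : is_upper_bound E (L - eps)).
    { intros y (a & b & hab & ->). apply Rnot_lt_le. intro. apply Hn. eauto. }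
    pose proof (L_least _ Hub). pose proof (cond_pos eps). lra. }
  destruct Hnear as (a0 & b0 & hab0 & hclose).
  apply (Filter_prod _ _ _ (fun x => 0 < x < a0) (fun y => b0 < y)).
  - apply at_right_0_between. lra.
  - exists b0. auto.
  - intros x y hx hy. exists (RInt f x y). split.
    + apply (RInt_correct (V := R_CompleteNormedModule)), ex_RInt_half_line; lra.
    + apply HP. change (Rabs (RInt f x y - L) < eps).
      assert (RInt f x y <= L) by (apply L_ub; exists x, y; split; [lra | reflexivity]).
      assert (RInt f a0 b0 <= RInt f x y) by (apply RInt_le_RInt_wider; lra).
      apply Rabs_def1; lra.
Qed.

End NonnegativeIntegrand.

(** * The Gamma function *)

Lemma Rpower_mul_exp_le_exp_half s :
  exists C, 0 < C /\ forall t, 1 <= t -> Rpower t s * exp (- t) <= C * exp (- t / 2).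
Proof.
  set (c := Rabs s + 1).
  assert (hc : 1 <= c) by (unfold c; pose proof (Rabs_pos s); lra).
  exists (exp (c * ln (2 * c))). split; [apply exp_pos |].
  intros t ht. unfold Rpower. rewrite <- !exp_plus. apply exp_le_exp_of_le.
  assert (hlnt : 0 <= ln t) by (rewrite <- ln_1; apply ln_le; lra).
  assert (hs : s * ln t <= c * ln t).
  { apply Rmult_le_compat_r; [exact hlnt |]. unfold c. pose proof (Rle_abs s). lra. }
  (* [ln y <= y - 1] at [y = t / (2 c)] *)
  assert (hln : ln t <= t / (2 * c) - 1 + ln (2 * c)).
  { assert (hy : 0 < t / (2 * c)) by (apply Rdiv_lt_0_compat; lra).
    pose proof (exp_ineq1_le (ln (t / (2 * c)))) as H.
    rewrite exp_ln in H by exact hy. rewrite ln_div in H by lra. lra. }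
  assert (c * ln t <= c * (t / (2 * c) - 1 + ln (2 * c))) by (apply Rmult_le_compat_l; lra).
  replace (c * (t / (2 * c) - 1 + ln (2 * c))) with (t / 2 - c + c * ln (2 * c)) in H
    by (field; lra).
  lra.
Qed.

Lemma is_lim_exp_half_opp C : is_lim (fun t => C * exp (- t / 2)) p_infty 0.
Proof.
  replace (Finite 0) with (Rbar_mult C 0) by (simpl; f_equal; ring).
  apply is_lim_scal_l.
  apply (is_lim_comp exp (fun t => - t / 2) p_infty 0 m_infty is_lim_exp_m).
  - replace m_infty with (Rbar_mult (Rbar_opp p_infty) (/ 2)).
    + apply is_lim_scal_r, (is_lim_opp (fun t => t)), is_lim_id.
    + rewrite Rbar_mult_comm, Rbar_mult_opp_r, Rbar_mult_pos_pinfty by lra. reflexivity.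
  - apply filter_forall. discriminate.
Qed.

Lemma Rpower_mul_exp_pinfty s :
  filterlim (fun t => Rpower t s * exp (- t)) (Rbar_locally p_infty) (locally 0).
Proof.
  destruct (Rpower_mul_exp_le_exp_half s) as (C & hC & HC).
  change (is_lim (fun t => Rpower t s * exp (- t)) p_infty 0).
  apply (is_lim_le_le_loc (fun _ => 0) (fun t => C * exp (- t / 2))).
  - exists 1. intros t ht. split; [| apply HC; lra].
    apply Rlt_le, Rmult_lt_0_compat; apply exp_pos.
  - apply is_lim_const.
  - apply is_lim_exp_half_opp.
Qed.

Lemma Rpower_mul_exp_0 s : 0 < s ->
  filterlim (fun t => Rpower t s * exp (- t)) (at_right 0) (locally 0).
Proof.
  intros hs. apply filterlim_locally. intros eps.
  set (d := Rpower eps (/ s)).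
  generalize (at_right_0_between d (exp_pos _)). apply filter_imp. intros t ht.
  change (Rabs (Rpower t s * exp (- t) - 0) < eps).
  assert (hts : Rpower t s < eps).
  { replace (pos eps) with (Rpower d s).
    - apply Rlt_Rpower_l; lra.
    - unfold d. rewrite Rpower_mult, Rinv_l, Rpower_1 by (pose proof (cond_pos eps); lra).
      reflexivity. }
  assert (exp (- t) <= 1) by (rewrite <- exp_0; apply exp_le_exp_of_le; lra).
  pose proof (Rpower_pos t s). pose proof (exp_pos (- t)).
  apply Rabs_def1; nra.
Qed.

Definition Gamma_integrand (s t : R) : R := Rpower t (s - 1) * exp (- t).

Lemma Gamma_integrand_pos s t : 0 < Gamma_integrand s t.
Proof. apply Rmult_lt_0_compat; apply exp_pos. Qed.

Lemma Gamma_integrand_continuous s t : 0 < t -> continuous (Gamma_integrand s) t.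
Proof.
  intros ht. apply (ex_derive_continuous (Gamma_integrand s)).
  unfold Gamma_integrand, Rpower. auto_derive. lra.
Qed.

Lemma Gamma_integrand_shift s b t :
  0 < t -> Gamma_integrand (s + b) t = Rpower t b * Gamma_integrand s t.
Proof.
  intros ht. unfold Gamma_integrand.
  replace (s + b - 1) with (b + (s - 1)) by ring. rewrite Rpower_plus. ring.
Qed.

Lemma RInt_Gamma_integrand_le_0_1 s a :
  0 < s -> 0 < a <= 1 -> RInt (Gamma_integrand s) a 1 <= / s.
Proof.
  intros hs ha.
  assert (Hprim : is_RInt (fun t => Rpower t (s - 1)) a 1 ((Rpower 1 s - Rpower a s) / s)).
  { apply (is_RInt_ext (fun t => scal (/ s) (s * Rpower t (s - 1)))).
    { intros x _. unfold scal; simpl; unfold mult; simpl. field. lra. }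
    replace ((Rpower 1 s - Rpower a s) / s) with (scal (/ s) (minus (Rpower 1 s) (Rpower a s)))
      by (unfold scal, minus, plus, opp; simpl; unfold mult; simpl; field; lra).
    apply (is_RInt_scal (V := R_NormedModule)), (is_RInt_derive (fun t => Rpower t s)).
    - intros x hx. apply is_derive_Reals, derivable_pt_lim_power.
      exact (Rmin_Rmax_pos a 1 x ltac:(lra) Rlt_0_1 hx).
    - intros x hx. apply (ex_derive_continuous (fun t => s * Rpower t (s - 1))).
      unfold Rpower. auto_derive. exact (Rmin_Rmax_pos a 1 x ltac:(lra) Rlt_0_1 hx). }
  apply Rle_trans with ((Rpower 1 s - Rpower a s) / s).
  - rewrite <- (is_RInt_unique _ _ _ _ Hprim). apply RInt_le; [lra | | eexists; eauto |].
    + apply ex_RInt_half_line; [apply Gamma_integrand_continuous | lra | lra].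
    + intros x hx. unfold Gamma_integrand.
      rewrite <- (Rmult_1_r (Rpower x (s - 1))) at 2.
      apply Rmult_le_compat_l; [apply Rlt_le, exp_pos |].
      rewrite <- exp_0. apply exp_le_exp_of_le. lra.
  - rewrite Rpower_base_1. pose proof (Rpower_pos a s). unfold Rdiv.
    rewrite <- (Rmult_1_l (/ s)) at 2.
    apply Rmult_le_compat_r; [apply Rlt_le, Rinv_0_lt_compat, hs | lra].
Qed.

Lemma RInt_Gamma_integrand_le_1_pinfty s :
  exists B, forall b, 1 <= b -> RInt (Gamma_integrand s) 1 b <= B.
Proof.
  destruct (Rpower_mul_exp_le_exp_half (s - 1)) as (C & hC & HC).
  exists (2 * C). intros b hb.
  assert (Hprim : is_RInt (fun t => C * exp (- t / 2)) 1 b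
                    (-2 * C * exp (- b / 2) - -2 * C * exp (- 1 / 2))).
  { apply (is_RInt_derive (fun t => -2 * C * exp (- t / 2))).
    - intros x _. auto_derive; [exact I | unfold Rdiv; field].
    - intros x _. apply (ex_derive_continuous (fun t => C * exp (- t / 2))). auto_derive. exact I. }
  apply Rle_trans with (RInt (fun t => C * exp (- t / 2)) 1 b).
  - apply RInt_le; [lra | | eexists; eauto |].
    + apply ex_RInt_half_line; [apply Gamma_integrand_continuous | lra | lra].
    + intros x hx. apply HC. lra.
  - rewrite (is_RInt_unique _ _ _ _ Hprim).
    pose proof (exp_pos (- b / 2)).
    assert (exp (- 1 / 2) <= 1) by (rewrite <- exp_0; apply exp_le_exp_of_le; lra).
    nra.
Qed.

Lemma is_RInt_gen_Gamma s :
  0 < s -> is_RInt_gen (Gamma_integrand s) (at_right 0) (Rbar_locally p_infty) (Gamma s).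
Proof.
  intros hs. apply (RInt_gen_correct (V := R_CompleteNormedModule)).
  destruct (RInt_Gamma_integrand_le_1_pinfty s) as [B HB].
  assert (Hge0 : forall x, 0 < x -> 0 <= Gamma_integrand s x)
    by (intros; apply Rlt_le, Gamma_integrand_pos).
  apply (ex_RInt_gen_half_line_bounded _ (Gamma_integrand_continuous s) Hge0 (/ s + B)).
  intros a b hab.
  assert (hm : 0 < Rmin a 1 <= 1) by (split; [apply Rmin_glb_lt; lra | apply Rmin_r]).
  assert (hM : 1 <= Rmax b 1) by apply Rmax_r.
  apply Rle_trans with (RInt (Gamma_integrand s) (Rmin a 1) (Rmax b 1)).
  { pose proof (Rmin_l a 1). pose proof (Rmax_l b 1).
    apply RInt_le_RInt_wider; [apply Gamma_integrand_continuous | exact Hge0 | lra | lra]. }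
  rewrite <- (RInt_Chasles _ (Rmin a 1) 1 (Rmax b 1))
    by (apply ex_RInt_half_line; [apply Gamma_integrand_continuous | lra | lra]).
  pose proof (RInt_Gamma_integrand_le_0_1 s _ hs hm). pose proof (HB _ hM).
  unfold plus; simpl. lra.
Qed.

Lemma is_derive_Rpower_mul_exp s t : 0 < t ->
  is_derive (fun t => Rpower t s * exp (- t)) t
    (s * Gamma_integrand s t - Gamma_integrand (s + 1) t).
Proof.
  intros ht. unfold Gamma_integrand. replace (s + 1 - 1) with s by ring.
  rewrite Rpower_minus_1 by exact ht.
  unfold Rpower. auto_derive; [lra | field; lra].
Qed.

(* Integration by parts: [t^s e^(-t)] is a primitive of the integrand. *)
Lemma is_RInt_gen_Gamma_rec s l0 :
  filterlim (fun t => Rpower t s * exp (- t)) (at_right 0) (locally l0) ->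
  is_RInt_gen (fun t => s * Gamma_integrand s t - Gamma_integrand (s + 1) t)
    (at_right 0) (Rbar_locally p_infty) (0 - l0).
Proof.
  intros H0. apply (is_RInt_gen_half_line_Derive (fun t => Rpower t s * exp (- t))); auto.
  - apply is_derive_Rpower_mul_exp.
  - intros x hx.
    apply (ex_derive_continuous (fun t => s * Gamma_integrand s t - Gamma_integrand (s + 1) t)).
    unfold Gamma_integrand, Rpower. auto_derive. lra.
  - apply Rpower_mul_exp_pinfty.
Qed.

Lemma Gamma_succ s : 0 < s -> Gamma (s + 1) = s * Gamma s.
Proof.
  intros hs.
  pose proof (is_RInt_gen_Gamma_rec s 0 (Rpower_mul_exp_0 s hs)) as Hparts.
  pose proof (is_RInt_gen_half_line_lin _ _ _ _ s (-1) (is_RInt_gen_Gamma s hs)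
                (is_RInt_gen_Gamma (s + 1) ltac:(lra))) as Hlin.
  assert (Hext : is_RInt_gen (fun t => s * Gamma_integrand s t - Gamma_integrand (s + 1) t)
                   (at_right 0) (Rbar_locally p_infty) (s * Gamma s + -1 * Gamma (s + 1))).
  { eapply is_RInt_gen_ext; [| exact Hlin].
    apply filter_forall. intros _ x _. simpl. ring. }
  pose proof (is_RInt_gen_half_line_unique _ _ _ Hparts Hext). lra.
Qed.

Lemma Gamma_one : Gamma 1 = 1.
Proof.
  assert (H0 : filterlim (fun t => Rpower t 0 * exp (- t)) (at_right 0) (locally 1)).
  { apply (filterlim_ext (fun t => exp (- t))).
    { intros t. unfold Rpower. rewrite Rmult_0_l, exp_0. ring. }
    apply (filterlim_filter_le_1 (F := locally 0)).
    { intros P HP. apply filter_imp with (2 := HP). auto. }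
    pose proof (ex_derive_continuous (fun t => exp (- t)) 0 ltac:(auto_derive; exact I)) as Hc.
    unfold continuous in Hc. cbv beta in Hc. rewrite Ropp_0, exp_0 in Hc. exact Hc. }
  pose proof (is_RInt_gen_Gamma_rec 0 1 H0) as Hparts.
  pose proof (is_RInt_gen_half_line_lin _ _ _ _ (-1) 0 (is_RInt_gen_Gamma 1 Rlt_0_1)
                (is_RInt_gen_Gamma 1 Rlt_0_1)) as Hlin.
  assert (Hext : is_RInt_gen (fun t => 0 * Gamma_integrand 0 t - Gamma_integrand (0 + 1) t)
                   (at_right 0) (Rbar_locally p_infty) (-1 * Gamma 1 + 0 * Gamma 1)).
  { eapply is_RInt_gen_ext; [| exact Hlin].
    apply filter_forall. intros _ x _. simpl. rewrite Rplus_0_l. ring. }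
  pose proof (is_RInt_gen_half_line_unique _ _ _ Hparts Hext). lra.
Qed.

Lemma Gamma_nat n : Gamma (INR n + 1) = INR (fact n).
Proof.
  induction n as [| n IH].
  - rewrite Rplus_0_l. apply Gamma_one.
  - rewrite S_INR, Gamma_succ, IH, fact_simpl, mult_INR, S_INR by (pose proof (pos_INR n); lra).
    ring.
Qed.

(* Concavity of [u |-> u^b]: both tangent-line bounds of [exp] at [b ln u] are averaged. *)
Lemma Rpower_le_Bernoulli u b : 0 < u -> 0 <= b <= 1 -> Rpower u b <= 1 + b * (u - 1).
Proof.
  intros hu hb. unfold Rpower. set (m := b * ln u).
  assert (Htangent : forall x, exp m * (1 + x - m) <= exp x).
  { intros x. pose proof (exp_ineq1_le (x - m)). pose proof (exp_pos m).
    replace x with (m + (x - m)) at 2 by ring. rewrite exp_plus. nra. }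
  pose proof (Htangent 0) as H0. pose proof (Htangent (ln u)) as H1.
  rewrite exp_0 in H0. rewrite exp_ln in H1 by exact hu.
  assert (exp m = (1 - b) * (exp m * (1 + 0 - m)) + b * (exp m * (1 + ln u - m)))
    by (unfold m; ring).
  nra.
Qed.

Lemma Gamma_integrand_shift_le s b t : 0 < s -> 0 <= b <= 1 -> 0 < t ->
  Gamma_integrand (s + b) t
  <= (1 - b) * Rpower s b * Gamma_integrand s t + b * Rpower s (b - 1) * Gamma_integrand (s + 1) t.
Proof.
  intros hs hb ht. rewrite !Gamma_integrand_shift, Rpower_1, Rpower_minus_1 by lra.
  assert (hts : 0 < t / s) by (apply Rdiv_lt_0_compat; lra).
  replace (Rpower t b) with (Rpower s b * Rpower (t / s) b)
    by (rewrite Rpower_mult_distr by lra; f_equal; field; lra).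
  replace ((1 - b) * Rpower s b * Gamma_integrand s t
           + b * (Rpower s b / s) * (t * Gamma_integrand s t))
    with (Rpower s b * Gamma_integrand s t * (1 + b * (t / s - 1))) by (field; lra).
  replace (Rpower s b * Rpower (t / s) b * Gamma_integrand s t)
    with (Rpower s b * Gamma_integrand s t * Rpower (t / s) b) by ring.
  apply Rmult_le_compat_l.
  - pose proof (Gamma_integrand_pos s t). pose proof (Rpower_pos s b). nra.
  - apply Rpower_le_Bernoulli; assumption.
Qed.

Lemma Gamma_le_Rpower_mul s b : 0 < s -> 0 <= b <= 1 -> Gamma (s + b) <= Rpower s b * Gamma s.
Proof.
  intros hs hb.
  apply Rle_trans with ((1 - b) * Rpower s b * Gamma s + b * Rpower s (b - 1) * Gamma (s + 1)).
  - apply (is_RInt_gen_half_line_le (Gamma_integrand (s + b))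
             (fun t => (1 - b) * Rpower s b * Gamma_integrand s t
                       + b * Rpower s (b - 1) * Gamma_integrand (s + 1) t)).
    + intros t ht. split; [apply Rlt_le, Gamma_integrand_pos |].
      apply Gamma_integrand_shift_le; assumption.
    + apply is_RInt_gen_Gamma. lra.
    + apply is_RInt_gen_half_line_lin; apply is_RInt_gen_Gamma; lra.
  - rewrite Gamma_succ, Rpower_minus_1 by exact hs. right. field. lra.
Qed.

Lemma Gamma_pos s : 0 < s -> 0 < Gamma s.
Proof.
  assert (Hunit : forall s, 0 < s <= 1 -> 0 < Gamma s).
  { intros t ht. pose proof (Gamma_le_Rpower_mul t (1 - t) ltac:(lra) ltac:(lra)) as H.
    replace (t + (1 - t)) with 1 in H by ring. rewrite Gamma_one in H.
    pose proof (Rpower_pos t (1 - t)).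
    destruct (Rle_or_lt (Gamma t) 0); [nra | assumption]. }
  intros hs. destruct (nfloor1_ex s hs) as [n hn]. revert s hs hn.
  induction n as [| n IH]; intros t ht htn.
  - apply Hunit. simpl in htn. lra.
  - rewrite S_INR in htn. pose proof (pos_INR n).
    replace t with (t - 1 + 1) by ring. rewrite Gamma_succ by lra.
    apply Rmult_lt_0_compat; [lra | apply IH; lra].
Qed.

(* Wendel's inequality; the lower bound is the upper one at [(s + b, 1 - b)]. *)
Lemma Gamma_ratio_bounds s b : 0 < s -> 0 <= b <= 1 ->
  Rpower (s / (s + b)) (1 - b) <= Gamma (s + b) / (Rpower s b * Gamma s) <= 1.
Proof.
  intros hs hb.
  pose proof (Gamma_pos s hs) as hG. pose proof (Rpower_pos s b) as hPs.
  pose proof (Rpower_pos (s + b) (1 - b)) as hP.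
  assert (hden : 0 < Rpower s b * Gamma s) by nra.
  split.
  - apply Rle_div_r; [exact hden |].
    assert (E : Rpower (s / (s + b)) (1 - b) * Rpower s b = s / Rpower (s + b) (1 - b)).
    { unfold Rpower. rewrite ln_div, <- exp_plus by lra.
      replace ((1 - b) * (ln s - ln (s + b)) + b * ln s)
        with (ln s + - ((1 - b) * ln (s + b))) by ring.
      rewrite exp_plus, exp_ln, exp_Ropp by lra. reflexivity. }
    pose proof (Gamma_le_Rpower_mul (s + b) (1 - b) ltac:(lra) ltac:(lra)) as Hup.
    replace (s + b + (1 - b)) with (s + 1) in Hup by ring. rewrite Gamma_succ in Hup by exact hs.
    rewrite <- Rmult_assoc, E.
    replace (s / Rpower (s + b) (1 - b) * Gamma s) with (s * Gamma s / Rpower (s + b) (1 - b))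
      by (field; lra).
    apply (Rle_div_l _ _ _ hP). lra.
  - apply (Rdiv_le_1 _ _ hden). apply Gamma_le_Rpower_mul; assumption.
Qed.

(** * Asymptotics of the Gamma function *)

Lemma is_lim_seq_inv_succ : is_lim_seq (fun n => / (INR n + 1)) 0.
Proof.
  replace (Finite 0) with (Rbar_inv p_infty) by reflexivity.
  apply is_lim_seq_inv; [| discriminate].
  apply (is_lim_seq_ext (fun n => INR (S n))); [intros; apply S_INR |].
  apply (is_lim_seq_incr_1 INR), is_lim_seq_INR.
Qed.

Lemma is_lim_seq_succ_ratio c : is_lim_seq (fun n => (INR n + 1 + c) / (INR n + 1)) 1.
Proof.
  apply (is_lim_seq_ext (fun n => 1 + c * / (INR n + 1))).
  { intros n. pose proof (pos_INR n). field. lra. }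
  pose proof (is_lim_seq_plus' _ _ _ _ (is_lim_seq_const 1)
                (is_lim_seq_scal_l _ c _ is_lim_seq_inv_succ)) as H.
  rewrite Rmult_0_r, Rplus_0_r in H. exact H.
Qed.

Lemma is_lim_seq_Rpower_1 (u : nat -> R) c :
  is_lim_seq u 1 -> is_lim_seq (fun n => Rpower (u n) c) 1.
Proof.
  intros Hu.
  assert (Hc : continuity_pt (fun x => Rpower x c) 1).
  { apply continuity_pt_filterlim, (ex_derive_continuous (fun x => Rpower x c)).
    unfold Rpower. auto_derive. lra. }
  pose proof (is_lim_seq_continuous _ u 1 Hc Hu) as H. cbv beta in H.
  rewrite Rpower_base_1 in H. exact H.
Qed.

Lemma is_lim_seq_Gamma_ratio_le_1 b : 0 <= b <= 1 ->
  is_lim_seq (fun n => Gamma (INR n + 1 + b) / (Rpower (INR n + 1) b * Gamma (INR n + 1))) 1.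
Proof.
  intros hb.
  apply (is_lim_seq_le_le_loc (fun n => Rpower ((INR n + 1) / (INR n + 1 + b)) (1 - b))
           _ (fun _ => 1)); [| | apply is_lim_seq_const].
  - exists 0%nat. intros n _. apply Gamma_ratio_bounds; [pose proof (pos_INR n); lra | exact hb].
  - apply is_lim_seq_Rpower_1.
    pose proof (is_lim_seq_div' _ _ _ _ (is_lim_seq_const 1) (is_lim_seq_succ_ratio b)
                  ltac:(lra)) as H.
    rewrite Rdiv_1_l, Rinv_1 in H.
    eapply is_lim_seq_ext; [| exact H]. intros n. cbv beta.
    pose proof (pos_INR n). field. lra.
Qed.

Lemma is_lim_seq_Gamma_ratio c : 0 <= c ->
  is_lim_seq (fun n => Gamma (INR n + 1 + c) / (Rpower (INR n + 1) c * Gamma (INR n + 1))) 1.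
Proof.
  intros hc. destruct (nfloor_ex c hc) as [m hm]. revert c hc hm.
  induction m as [| m IH]; intros c hc hm.
  - apply is_lim_seq_Gamma_ratio_le_1. simpl in hm. lra.
  - rewrite S_INR in hm. pose proof (pos_INR m).
    pose proof (is_lim_seq_mult' _ _ _ _ (is_lim_seq_succ_ratio (c - 1))
                  (IH (c - 1) ltac:(lra) ltac:(lra))) as Hlim.
    rewrite Rmult_1_l in Hlim. eapply is_lim_seq_ext; [| exact Hlim]. intros n. cbv beta.
    set (s := INR n + 1). assert (hs : 0 < s) by (unfold s; pose proof (pos_INR n); lra).
    replace (s + c) with (s + (c - 1) + 1) by ring.
    rewrite Gamma_succ, (Rpower_minus_1 s c) by lra.
    pose proof (Gamma_pos s hs). pose proof (Rpower_pos s c).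
    field. lra.
Qed.

Lemma is_lim_seq_Gamma_fact_ratio a : -1 < a ->
  is_lim_seq (fun n => Gamma (INR n + a + 1) / (Rpower (INR n + 1) a * INR (fact n))) 1.
Proof.
  intros ha.
  pose proof (is_lim_seq_div' _ _ _ _ (is_lim_seq_Gamma_ratio (a + 1) ltac:(lra))
                (is_lim_seq_succ_ratio a) ltac:(lra)) as H.
  rewrite Rdiv_1_l, Rinv_1 in H. eapply is_lim_seq_ext; [| exact H]. intros n. cbv beta.
  rewrite <- Gamma_nat. set (s := INR n + 1).
  assert (hs : 1 <= s) by (unfold s; pose proof (pos_INR n); lra).
  replace (INR n + a + 1) with (s + a) by (unfold s; ring).
  replace (s + (a + 1)) with (s + a + 1) by ring.
  rewrite (Gamma_succ (s + a)), Rpower_plus, Rpower_1 by lra.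
  pose proof (Gamma_pos s ltac:(lra)). pose proof (Gamma_pos (s + a) ltac:(lra)).
  pose proof (Rpower_pos s a). field. lra.
Qed.

(** * Derivatives of the orthonormal Laguerre polynomials at 0 *)

Lemma sumR_succ f m n : (m <= S n)%nat -> sumR f m (S n) = sumR f m n + f (S n).
Proof.
  intros hmn. unfold sumR. replace (S (S n) - m)%nat with (S (S n - m)) by lia.
  rewrite seq_S, map_app, fold_right_app. replace (m + (S n - m))%nat with (S n) by lia.
  generalize (map f (seq m (S n - m))). intros l.
  induction l as [| x l IH]; cbn [map fold_right] in *; lra.
Qed.

Lemma sumR_0_sum_f_R0 f n : sumR f 0 n = sum_f_R0 f n.
Proof.
  induction n as [| n IH].
  - unfold sumR. simpl. ring.
  - rewrite sumR_succ, IH by lia. reflexivity.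
Qed.

Lemma sumR_div f m n c : sumR f m n / c = sumR (fun k => f k / c) m n.
Proof.
  unfold sumR. induction (seq m (S n - m)) as [| k l IH]; simpl.
  - unfold Rdiv. ring.
  - rewrite <- IH. unfold Rdiv. ring.
Qed.

Lemma iter_Rplus_seq_single (g : nat -> R) j s len :
  (s <= j < s + len)%nat -> (forall k, k <> j -> g k = 0) ->
  Iter.iter Rplus 0 (seq s len) g = g j.
Proof.
  intros hj Hg. revert s hj. induction len as [| len IH]; intros s hj; [lia |]. simpl.
  destruct (Nat.eq_dec s j) as [-> | hsj].
  - rewrite (Iter.iter_ext _ _ _ _ (fun _ => 0)), Iter.iter_const by
      (intros k hk; apply in_seq in hk; apply Hg; lia).
    ring.
  - rewrite Hg, IH by lia. ring.
Qed.

Lemma Derive_n_sumR_monomial_0 (c : nat -> R) n j : (j <= n)%nat ->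
  Derive_n (fun x => sumR (fun k => c k * x ^ k) 0 n) j 0 = INR (fact j) * c j.
Proof.
  intros hj.
  rewrite (Derive_n_ext _ (fun x => Iter.iter Rplus 0 (seq 0 (S n)) (fun k => c k * x ^ k))).
  2: { intros x. unfold sumR. rewrite Nat.sub_0_r.
       induction (seq 0 (S n)) as [| k l IH]; simpl; [reflexivity | rewrite IH; reflexivity]. }
  rewrite Derive_n_iter_plus.
  2: { apply filter_forall. intros y k m _ _. apply ex_derive_n_scal_l, ex_derive_n_pow. }
  rewrite (iter_Rplus_seq_single _ j) by
    (lia || (intros k hk; rewrite Derive_n_scal_l, Derive_n_pow;
             destruct (le_dec j k); [rewrite pow_i by lia |]; ring)).
  rewrite Derive_n_scal_l, Derive_n_pow. destruct (le_dec j j) as [_ | ]; [| lia].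
  rewrite Nat.sub_diag. simpl. field.
Qed.

Lemma Derive_n_laguerre_on_0 a n j : (j <= n)%nat ->
  Derive_n (laguerre_on a n) j 0
  = (-1) ^ j * binomR (INR n + a) (n - j) / sqrt (laguerre_norm2 a n).
Proof.
  intros hj.
  set (c := fun k => (-1) ^ k * binomR (INR n + a) (n - k) / INR (fact k)
                     / sqrt (laguerre_norm2 a n)).
  rewrite (Derive_n_ext _ (fun x => sumR (fun k => c k * x ^ k) 0 n)).
  2: { intros x. unfold laguerre_on, laguerre. rewrite sumR_div.
       unfold sumR. f_equal. apply map_ext. intros k. unfold c, Rdiv. ring. }
  rewrite Derive_n_sumR_monomial_0 by exact hj. unfold c, Rdiv.
  set (t := / sqrt (laguerre_norm2 a n)). field. apply INR_fact_neq_0.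
Qed.

Lemma prodR_succ_shift f k : prodR f 1 (S k) = f 1%nat * prodR (fun p => f (S p)) 1 k.
Proof.
  unfold prodR. replace (S (S k) - 1)%nat with (S k) by lia.
  replace (S k - 1)%nat with k by lia.
  simpl. f_equal. rewrite <- seq_shift, map_map. reflexivity.
Qed.

Lemma Gamma_mul_prodR x k : -1 < x ->
  Gamma (x + 1) * prodR (fun p => x + INR k - INR p + 1) 1 k = Gamma (x + INR k + 1).
Proof.
  intros hx. induction k as [| k IH].
  - unfold prodR. simpl. ring_simplify (x + 0 + 1). ring.
  - rewrite prodR_succ_shift.
    replace (prodR (fun p => x + INR (S k) - INR (S p) + 1) 1 k)
      with (prodR (fun p => x + INR k - INR p + 1) 1 k)
      by (unfold prodR; f_equal; apply map_ext; intros p; rewrite !S_INR; ring).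
    replace (x + INR (S k) - INR 1 + 1) with (x + INR k + 1) by (rewrite S_INR; simpl; ring).
    replace (x + INR (S k) + 1) with (x + INR k + 1 + 1) by (rewrite S_INR; ring).
    rewrite (Gamma_succ (x + INR k + 1)), <- IH by (pose proof (pos_INR k); lra). ring.
Qed.

Lemma binomR_Gamma x k : -1 < x ->
  binomR (x + INR k) k = Gamma (x + INR k + 1) / (Gamma (x + 1) * INR (fact k)).
Proof.
  intros hx. unfold binomR. rewrite <- (Gamma_mul_prodR x k hx).
  pose proof (Gamma_pos (x + 1) ltac:(lra)). pose proof (INR_fact_neq_0 k).
  field. split; lra.
Qed.

Lemma Derive_n_laguerre_on_0_sqr a j n : -1 < a -> (j <= n)%nat ->
  (Derive_n (laguerre_on a n) j 0) ^ 2
  = Gamma (INR n + a + 1) * INR (fact n) / (Gamma (INR j + a + 1) ^ 2 * INR (fact (n - j)) ^ 2).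
Proof.
  intros ha hj. rewrite Derive_n_laguerre_on_0 by exact hj.
  replace (INR n + a) with (INR j + a + INR (n - j)) by (rewrite minus_INR by exact hj; ring).
  rewrite binomR_Gamma by (pose proof (pos_INR j); lra).
  replace (INR j + a + INR (n - j) + 1) with (INR n + a + 1)
    by (rewrite minus_INR by exact hj; ring).
  pose proof (Gamma_pos (INR n + a + 1) ltac:(pose proof (pos_INR n); lra)) as hGn.
  pose proof (Gamma_pos (INR j + a + 1) ltac:(pose proof (pos_INR j); lra)) as hGj.
  pose proof (lt_0_INR _ (lt_O_fact n)) as hfn. pose proof (INR_fact_neq_0 (n - j)).
  assert (hsqrt : sqrt (laguerre_norm2 a n) ^ 2 = laguerre_norm2 a n).
  { rewrite <- Rsqr_pow2. apply Rsqr_sqrt. unfold laguerre_norm2.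
    apply Rlt_le, Rdiv_lt_0_compat; assumption. }
  assert (hsign : ((-1) ^ j) ^ 2 = 1).
  { rewrite <- pow_mult, Nat.mul_comm, pow_mult. replace ((-1) ^ 2) with 1 by ring. apply pow1. }
  unfold Rdiv. rewrite !Rpow_mult_distr, !pow_inv, hsign, hsqrt. unfold laguerre_norm2.
  field. repeat split; lra.
Qed.

Lemma is_lim_seq_fact_falling_ratio j :
  is_lim_seq (fun n => INR (fact n) / (INR (fact (n - j)) * (INR n + 1) ^ j)) 1.
Proof.
  induction j as [| j IH].
  - apply (is_lim_seq_ext (fun _ => 1)); [| apply is_lim_seq_const].
    intros n. rewrite Nat.sub_0_r. simpl. field. apply INR_fact_neq_0.
  - pose proof (is_lim_seq_mult' _ _ _ _ IH (is_lim_seq_succ_ratio (- (INR j + 1)))) as H.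
    rewrite Rmult_1_l in H. refine (is_lim_seq_ext_loc _ _ _ _ H).
    exists (S j). intros n hn.
    replace (n - j)%nat with (S (n - S j)) by lia.
    assert (hjn : INR j + 1 <= INR n) by (rewrite <- S_INR; apply le_INR; exact hn).
    rewrite fact_simpl, mult_INR, S_INR, minus_INR by lia. rewrite S_INR.
    pose proof (pos_INR n). pose proof (INR_fact_neq_0 (n - S j)).
    assert ((INR n + 1) ^ j <> 0) by (apply pow_nonzero; lra).
    simpl. field. repeat split; lra.
Qed.

Lemma is_lim_seq_Derive_n_laguerre_on_0_sqr a j : -1 < a ->
  is_lim_seq (fun n => (Derive_n (laguerre_on a n) j 0) ^ 2 / Rpower (INR n + 1) (2 * INR j + a))
    (/ Gamma (INR j + a + 1) ^ 2).
Proof.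
  intros ha. set (G0 := Gamma (INR j + a + 1)).
  assert (hG0 : 0 < G0) by (apply Gamma_pos; pose proof (pos_INR j); lra).
  pose proof (is_lim_seq_mult' _ _ _ _
                (is_lim_seq_mult' _ _ _ _ (is_lim_seq_Gamma_fact_ratio a ha)
                   (is_lim_seq_mult' _ _ _ _ (is_lim_seq_fact_falling_ratio j)
                      (is_lim_seq_fact_falling_ratio j)))
                (is_lim_seq_const (/ G0 ^ 2))) as H.
  rewrite !Rmult_1_l in H. refine (is_lim_seq_ext_loc _ _ _ _ H).
  exists j. intros n hn.
  rewrite Derive_n_laguerre_on_0_sqr by assumption. fold G0.
  assert (hs : 0 < INR n + 1) by (pose proof (pos_INR n); lra).
  replace (2 * INR j + a) with (INR j + INR j + a) by ring.
  rewrite !Rpower_plus, Rpower_pow by exact hs.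
  pose proof (Rpower_pos (INR n + 1) a). pose proof (INR_fact_neq_0 n).
  pose proof (INR_fact_neq_0 (n - j)).
  assert ((INR n + 1) ^ j <> 0) by (apply pow_nonzero; lra).
  assert (0 < Gamma (INR n + a + 1)) by (apply Gamma_pos; pose proof (pos_INR n); lra).
  field. repeat split; lra.
Qed.

(** * Partial sums of sequences of polynomial growth *)

Lemma is_lim_seq_Rpower_pinfty q : 0 < q -> is_lim_seq (fun n => Rpower (INR n + 1) q) p_infty.
Proof.
  intros hq.
  apply (is_lim_comp_seq (fun x => exp (q * ln x)) (fun n => INR n + 1) p_infty p_infty).
  - apply (is_lim_comp exp (fun x => q * ln x) p_infty p_infty p_infty is_lim_exp_p).
    + rewrite <- (Rbar_mult_pos_pinfty q hq) at 2. apply is_lim_scal_l, is_lim_ln_p.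
    + apply filter_forall. discriminate.
  - apply filter_forall. discriminate.
  - apply (is_lim_seq_ext (fun n => INR (S n))); [intros; apply S_INR |].
    apply (is_lim_seq_incr_1 INR), is_lim_seq_INR.
Qed.

Lemma is_lim_seq_inv_Rpower q : 0 < q -> is_lim_seq (fun n => / Rpower (INR n + 1) q) 0.
Proof.
  intros hq. replace (Finite 0) with (Rbar_inv p_infty) by reflexivity.
  apply is_lim_seq_inv; [apply is_lim_seq_Rpower_pinfty, hq | discriminate].
Qed.

Lemma is_lim_seq_Stolz_Cesaro (a b : nat -> R) (l : R) :
  (forall n, b n < b (S n)) -> is_lim_seq b p_infty ->
  is_lim_seq (fun n => (a (S n) - a n) / (b (S n) - b n)) l ->
  is_lim_seq (fun n => a n / b n) l.
Proof.
  intros Hinc Hb Hl.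
  assert (Htelescope : forall (u : nat -> R) n,
             sum_f_R0 (fun k => u (S k) - u k) n = u (S n) - u 0%nat).
  { intros u n. induction n as [| n IH]; simpl; [| rewrite IH]; ring. }
  assert (Hb_spec := proj2 (is_lim_seq_spec b p_infty) Hb).
  assert (Hshift : is_lim_seq (fun n => (a (S n) - a 0%nat) / (b (S n) - b 0%nat)) l).
  { apply is_lim_seq_Reals.
    apply (Un_cv_ext (fun n => sum_f_R0 (fun k => (b (S k) - b k) *
                                         ((a (S k) - a k) / (b (S k) - b k))) n
                               / sum_f_R0 (fun k => b (S k) - b k) n)).
    { intros n. rewrite Htelescope. f_equal. rewrite <- (Htelescope a).
      apply sum_eq. intros k _. pose proof (Hinc k). field. lra. }
    apply Cesaro; [apply is_lim_seq_Reals, Hl | intros k; pose proof (Hinc k); lra |].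
    intros M. destruct (Hb_spec (M + b 0%nat)) as [N HN]. exists N. intros n hn.
    rewrite Htelescope. specialize (HN (S n) ltac:(lia)). simpl in HN. lra. }
  assert (Hinv : is_lim_seq (fun n => / b (S n)) 0).
  { replace (Finite 0) with (Rbar_inv p_infty) by reflexivity.
    apply is_lim_seq_inv; [apply (is_lim_seq_incr_1 b), Hb | discriminate]. }
  apply is_lim_seq_incr_1.
  pose proof (is_lim_seq_plus' _ _ _ _
                (is_lim_seq_mult' _ _ _ _ Hshift
                   (is_lim_seq_minus' _ _ _ _ (is_lim_seq_const 1)
                      (is_lim_seq_scal_l _ (b 0%nat) _ Hinv)))
                (is_lim_seq_scal_l _ (a 0%nat) _ Hinv)) as H.
  replace (l * (1 - b 0%nat * 0) + a 0%nat * 0) with l in H by ring.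
  refine (is_lim_seq_ext_loc _ _ _ _ H).
  destruct (Hb_spec (Rabs (b 0%nat))) as [N HN]. exists N. intros n hn.
  specialize (HN (S n) ltac:(lia)). simpl in HN.
  pose proof (Rle_abs (b 0%nat)). pose proof (Rabs_pos (b 0%nat)).
  field. lra.
Qed.

Lemma is_lim_seq_Rpower_diff_quotient q (h : nat -> R) :
  is_lim_seq h 0 -> (forall n, h n <> 0) ->
  is_lim_seq (fun n => (Rpower (1 + h n) q - 1) / h n) q.
Proof.
  intros Hh Hh0. apply is_lim_seq_Reals. intros eps heps.
  destruct (derivable_pt_lim_power 1 q Rlt_0_1 eps heps) as [delta Hd].
  destruct (proj1 (is_lim_seq_Reals _ _) Hh delta (cond_pos delta)) as [N HN].
  exists N. intros n hn. specialize (HN n hn). unfold R_dist in HN. rewrite Rminus_0_r in HN.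
  specialize (Hd (h n) (Hh0 n) HN). rewrite !Rpower_base_1, Rmult_1_r in Hd. exact Hd.
Qed.

Lemma is_lim_seq_Rpower_backward_diff q :
  is_lim_seq (fun n => (Rpower (INR n + 1) q - Rpower (INR n) q) / Rpower (INR n + 1) (q - 1)) q.
Proof.
  assert (Hh : is_lim_seq (fun n => - / (INR n + 1)) 0).
  { replace (Finite 0) with (Rbar_opp 0) by (simpl; f_equal; ring).
    apply (is_lim_seq_opp (fun n => / (INR n + 1)) 0), is_lim_seq_inv_succ. }
  pose proof (is_lim_seq_Rpower_diff_quotient q _ Hh) as H.
  refine (is_lim_seq_ext_loc _ _ _ _ (H _)).
  2: { intros n. pose proof (pos_INR n). apply Ropp_neq_0_compat, Rinv_neq_0_compat. lra. }
  exists 1%nat. intros n hn. set (x := INR n + 1).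
  assert (hn0 : 0 < INR n) by (apply lt_0_INR; lia).
  assert (hx : 0 < x) by (unfold x; lra).
  replace (1 + - / x) with (INR n * / x) by (unfold x; field; lra).
  assert (E : Rpower (INR n * / x) q = Rpower (INR n) q / Rpower x q).
  { unfold Rpower. rewrite ln_mult, ln_Rinv, Rmult_plus_distr_l, exp_plus
      by (try apply Rinv_0_lt_compat; lra).
    replace (q * - ln x) with (- (q * ln x)) by ring. rewrite exp_Ropp. reflexivity. }
  rewrite E, Rpower_minus_1 by exact hx.
  pose proof (Rpower_pos x q). field. lra.
Qed.

Lemma is_lim_seq_sum_Rpower (u : nat -> R) (q c : R) : 0 < q ->
  is_lim_seq (fun n => u n / Rpower (INR n + 1) (q - 1)) c ->
  is_lim_seq (fun n => sum_f_R0 u n / Rpower (INR n + 1) q) (c / q).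
Proof.
  intros hq Hu. apply is_lim_seq_Stolz_Cesaro.
  - intros n. apply Rlt_Rpower_l; [exact hq |]. rewrite S_INR. pose proof (pos_INR n). lra.
  - apply is_lim_seq_Rpower_pinfty, hq.
  - apply is_lim_seq_incr_1 in Hu.
    pose proof (proj1 (is_lim_seq_incr_1 _ _) (is_lim_seq_Rpower_backward_diff q)) as Hd.
    pose proof (is_lim_seq_div' _ _ _ _ Hu Hd ltac:(lra)) as H.
    eapply is_lim_seq_ext; [| exact H]. intros n. cbv beta.
    rewrite tech5. rewrite !S_INR.
    assert (0 < INR n + 1 + 1) by (pose proof (pos_INR n); lra).
    assert (Rpower (INR n + 1) q < Rpower (INR n + 1 + 1) q)
      by (apply Rlt_Rpower_l; [exact hq | pose proof (pos_INR n); lra]).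
    pose proof (Rpower_pos (INR n + 1 + 1) (q - 1)).
    field. split; lra.
Qed.

Lemma Kjj_eq_sum_f_R0 a j n :
  Kjj a j n = sum_f_R0 (fun i => (Derive_n (laguerre_on a i) j 0) ^ 2) n.
Proof. apply sumR_0_sum_f_R0. Qed.

(* Only [K_j, K_(j+1), ...] enter [lam_tilde], so it differs from the full partial sums of
   [K] by a constant. *)
Lemma lam_tilde_succ_affine a M j : exists C, forall n, (j <= n)%nat ->
  lam_tilde a M j (S n) = INR n + 1 + M * (sum_f_R0 (Kjj a j) n + C).
Proof.
  exists (Kjj a j j - sum_f_R0 (Kjj a j) j). intros n hn. induction hn as [| n hn IH].
  - unfold lam_tilde, sumR, lam. replace (S (S j) - (j + 1))%nat with 1%nat by lia.
    cbn [seq map fold_right]. replace (j + 1 - 1)%nat with j by lia.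
    rewrite S_INR, plus_INR. change (INR 1) with 1. ring.
  - unfold lam_tilde, lam in *. rewrite sumR_succ by lia. cbv beta.
    replace (S (S n) - 1)%nat with (S n) by lia. rewrite tech5, !S_INR in *. lra.
Qed.

Lemma is_lim_seq_Kjj a j : -1 < a ->
  is_lim_seq (fun n => Kjj a j n / Rpower (INR n + 1) (2 * INR j + a + 1))
    (/ Gamma (INR j + a + 1) ^ 2 / (2 * INR j + a + 1)).
Proof.
  intros ha.
  apply (is_lim_seq_ext (fun n => sum_f_R0 (fun i => (Derive_n (laguerre_on a i) j 0) ^ 2) n
                                  / Rpower (INR n + 1) (2 * INR j + a + 1))).
  { intros n. rewrite Kjj_eq_sum_f_R0. reflexivity. }
  apply is_lim_seq_sum_Rpower; [pose proof (pos_INR j); lra |].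
  replace (2 * INR j + a + 1 - 1) with (2 * INR j + a) by ring.
  apply is_lim_seq_Derive_n_laguerre_on_0_sqr, ha.
Qed.

Theorem mainTheorem6 (a M : R) (j : nat) (ha : -1 < a) (hM : 0 < M) :
  is_lim_seq
    (fun n : nat => lam_tilde a M j n / Rpower (INR n) (2 * INR j + a + 2))
    (M / ((2 * INR j + a + 2) * (2 * INR j + a + 1) * (Gamma (a + INR j + 1)) ^ 2)).
Proof.
  set (G0 := Gamma (INR j + a + 1)). set (q := 2 * INR j + a + 1).
  assert (hG0 : 0 < G0) by (apply Gamma_pos; pose proof (pos_INR j); lra).
  assert (hq : 0 < q) by (unfold q; pose proof (pos_INR j); lra).
  assert (HS := is_lim_seq_sum_Rpower _ (q + 1) _ ltac:(lra)
                  ltac:(replace (q + 1 - 1) with q by ring; exact (is_lim_seq_Kjj a j ha))).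
  fold G0 q in HS.
  destruct (lam_tilde_succ_affine a M j) as [C HC].
  pose proof (is_lim_seq_plus' _ _ _ _ (is_lim_seq_inv_Rpower q hq)
                (is_lim_seq_scal_l _ M _
                   (is_lim_seq_plus' _ _ _ _ HS
                      (is_lim_seq_scal_l _ C _ (is_lim_seq_inv_Rpower (q + 1) ltac:(lra))))))
    as Hlim.
  replace (0 + M * (/ G0 ^ 2 / q / (q + 1) + C * 0))
    with (M / ((2 * INR j + a + 2) * (2 * INR j + a + 1) * (Gamma (a + INR j + 1)) ^ 2)) in Hlim
    by (replace (a + INR j + 1) with (INR j + a + 1) by ring; fold G0;
        replace (2 * INR j + a + 2) with (q + 1) by (unfold q; ring); fold q; field; lra).
  apply is_lim_seq_incr_1. refine (is_lim_seq_ext_loc _ _ _ _ Hlim). exists j. intros n hn.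
  rewrite HC, S_INR by exact hn.
  replace (2 * INR j + a + 2) with (q + 1) by (unfold q; ring).
  assert (hx : 0 < INR n + 1) by (pose proof (pos_INR n); lra).
  rewrite (Rpower_plus q 1), Rpower_1 by exact hx.
  pose proof (Rpower_pos (INR n + 1) q). field. lra.
Qed.
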